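(* Let $n,p>1$ and $q\geq 1$ be integers. A magic column rectangle $MCR(n^{(p)};q)$ exists if and only if $n$ is even or all three of $n,p,q$ are odd.
   Context: A magic column rectangle $MCR(n^{(p)};q)$ is an $np\times q$ matrix whose entries are $1,2,\ldots,npq$, each appearing exactly once, which is partitioned into $pq$ blocks of size $n\times 1$ (each column is split into $p$ consecutive segments of $n$ entries) such that the sum of the entries in every block is the same constant (necessarily $\frac{n(npq+1)}{2}$). *)

From mathcomp Require Import all_boot all_order all_algebra.
Set Implicit Arguments. Unset Strict Implicit. Unset Printing Implicit Defensive.

Lemma seg_row_lt (n p : nat) (s : 'I_p) (r : 'I_n) : s * n + r < n * p.
Proof.
case: s r => s hs [r hr] /=.
apply: (@leq_trans (s * n + n)); first by rewrite ltn_add2l.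
by rewrite addnC -mulSn mulnC leq_mul2l hs orbT.
Qed.

Definition seg_row (n p : nat) (s : 'I_p) (r : 'I_n) : 'I_(n * p) :=
  Ordinal (seg_row_lt s r).

Definition is_MCR (n p q : nat) (A : 'M[nat]_(n * p, q)) : Prop :=
  (forall k, 1 <= k <= n * p * q ->
     exists! ij : 'I_(n * p) * 'I_q, A ij.1 ij.2 = k) /\
  (forall i j, 1 <= A i j <= n * p * q) /\
  exists c : nat, forall (s : 'I_p) (j : 'I_q),
    \sum_(r < n) A (seg_row s r) j = c.

Definition MCR_exists (n p q : nat) : Prop :=
  exists A : 'M[nat]_(n * p, q), is_MCR A.

(* Necessity: the pq segments all have sum c and together contain 1, ..., npq,
   so pq c = npq (npq + 1) / 2, i.e. 2c = n (npq + 1); for odd n this forces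
   npq, hence p and q, to be odd.

   Sufficiency: let m = pq and take a Kotzig array with n rows, i.e. n
   permutations w_0, ..., w_(n-1) of {0, ..., m-1} whose column sums
   c = sum_r w_r(k) do not depend on k.  Number the segments 0, ..., m-1 and put
   r m + w_r(k) + 1 in position r of segment k: the entries are 1, ..., npq
   and every segment sums to m n(n-1)/2 + c + n.  Kotzig arrays stack, and
   (k, m-1-k) gives one with two rows for every m, while for m = 2h+1 the rows
   k, k + h (mod m) and 3h - k - (k + h mod m) give one with three rows; hence
   they exist for every even n, and for every odd n >= 3 when m is odd. *)

From mathcomp Require Import all_boot all_order all_algebra.
From mathcomp Require Import zify.

Set Implicit Arguments.
Unset Strict Implicit.
Unset Printing Implicit Defensive.

Lemma divmod_uniq {d a b a' b'} : b < d -> b' < d ->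
  a * d + b = a' * d + b' -> a = a' /\ b = b'.
Proof.
by move=> lt_bd lt_b'd /(congr1 (edivn^~ d)); rewrite !edivn_eq // => -[].
Qed.

Lemma double_bin2 n : 'C(n, 2).*2 = n * n.-1.
Proof.
rewrite bin2 -[RHS]odd_double_half oddM.
by case: n => //= n; rewrite andNb.
Qed.

Section InjectiveIntoOrdinal.
Variables (T : finType) (f : T -> nat).
Hypotheses (f_lt : forall x, f x < #|T|) (f_inj : injective f).

Let f_ord x : 'I_#|T| := Ordinal (f_lt x).

Let f_ord_bij : bijective f_ord.
Proof.
by apply: inj_card_bij; [move=> x y /(congr1 val)/f_inj | rewrite card_ord].
Qed.

Lemma inj_ord_onto k : k < #|T| -> exists! x, f x = k.
Proof.
move=> lt_k; have [g _ g_ordK] := f_ord_bij.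
have fg : f (g (Ordinal lt_k)) = k by have /(congr1 val) := g_ordK (Ordinal lt_k).
by exists (g (Ordinal lt_k)); split=> // y fy; apply: f_inj; rewrite fg fy.
Qed.

Lemma sum_inj_ord : \sum_x f x = 'C(#|T|, 2).
Proof. by rewrite -bin2_sum big_mkord (reindex f_ord) //; apply: onW_bij. Qed.

End InjectiveIntoOrdinal.

Lemma sum_seg_row n p (F : 'I_(n * p) -> nat) :
  \sum_(i < n * p) F i = \sum_(s < p) \sum_(r < n) F (seg_row s r).
Proof.
rewrite pair_bigA /= (reindex (fun x : 'I_p * 'I_n => seg_row x.1 x.2)) //.
apply: onW_bij; apply: inj_card_bij; last by rewrite card_prod !card_ord mulnC.
move=> [s r] [s' r'] /(congr1 val) /=.
move/(divmod_uniq (ltn_ord r) (ltn_ord r')) => [eq_s eq_r].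
by congr pair; apply: val_inj.
Qed.

Lemma sum_MCR_entries n p q (A : 'M[nat]_(n * p, q)) : is_MCR A ->
  \sum_(x : 'I_(n * p) * 'I_q) A x.1 x.2 = 'C((n * p * q).+1, 2).
Proof.
move=> [A_onto [A_range _]]; set N := n * p * q.
have card_N : #|{: 'I_(n * p) * 'I_q}| = N by rewrite card_prod !card_ord.
have lt_A x : (A x.1 x.2).-1 < #|{: 'I_(n * p) * 'I_q}|.
  by rewrite card_N; have := A_range x.1 x.2; lia.
have inj_A : injective (fun x : 'I_(n * p) * 'I_q => (A x.1 x.2).-1).
  move=> x y eq_xy; have /A_onto[z [_ uz]] := A_range x.1 x.2.
  rewrite -(uz x) // (uz y) //.
  by have := A_range x.1 x.2; have := A_range y.1 y.2; lia.
rewrite binS bin1 -card_N -(sum_inj_ord lt_A inj_A) -sum1_card -big_split /=.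
by apply: eq_bigr => x _; have := A_range x.1 x.2; lia.
Qed.

Lemma MCR_magic_constant n p q : 0 < p -> 0 < q -> MCR_exists n p q ->
  exists c, c.*2 = n * (n * p * q).+1.
Proof.
move=> p_gt0 q_gt0 [A MCR_A]; have [_ [_ [c sum_seg]]] := MCR_A; exists c.
have total : q * (p * c) = 'C((n * p * q).+1, 2).
  rewrite -(sum_MCR_entries MCR_A) -pair_bigA exchange_big /=.
  rewrite -[q in LHS]card_ord -sum_nat_const; apply: eq_bigr => j _.
  rewrite sum_seg_row -[p in LHS]card_ord -sum_nat_const.
  by apply: eq_bigr => s _; rewrite sum_seg.
have pq_gt0 : 0 < p * q by rewrite muln_gt0 p_gt0.
apply/eqP; rewrite -(eqn_pmul2l pq_gt0); apply/eqP.
by move/(congr1 double): total; rewrite double_bin2 /=; nia.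
Qed.

Definition kotzig_array (n m : nat) (w : nat -> nat -> nat) : Prop :=
  [/\ forall r k, r < n -> k < m -> w r k < m,
      forall r k k', r < n -> k < m -> k' < m -> w r k = w r k' -> k = k' &
      exists c, forall k, k < m -> \sum_(0 <= r < n) w r k = c].

Definition stack_rows n1 (w1 w2 : nat -> nat -> nat) r :=
  if r < n1 then w1 r else w2 (r - n1).

Lemma kotzig_stack n1 n2 m w1 w2 :
  kotzig_array n1 m w1 -> kotzig_array n2 m w2 ->
  kotzig_array (n1 + n2) m (stack_rows n1 w1 w2).
Proof.
rewrite /stack_rows => -[lt1 inj1 [c1 sum1]] [lt2 inj2 [c2 sum2]]; split.
- move=> r k lt_r lt_k; case: (ltnP r n1) => [lt_rn1|le_n1r]; first exact: lt1.
  by apply: lt2; lia.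
- move=> r k k' lt_r lt_k lt_k'; case: (ltnP r n1) => [lt_rn1|le_n1r].
    exact: inj1.
  by apply: inj2; lia.
- exists (c1 + c2) => k lt_k.
  rewrite (big_cat_nat _ (leq_addr n2 n1)) //= (big_addn 0 _ n1) addKn.
  rewrite -(sum1 k lt_k) -(sum2 k lt_k); congr (_ + _); apply: eq_big_nat => r.
    by case/andP=> _ ->.
  by move=> _; rewrite ltnNge leq_addl addnK.
Qed.

Definition pair_rows m r k := if r == 0 then k else m.-1 - k.

Lemma kotzig_pair m : kotzig_array 2 m (pair_rows m).
Proof.
rewrite /pair_rows; split.
- by case=> [|r] k _ lt_k /=; lia.
- by case=> [|r] k k' _ lt_k lt_k' /=; lia.
- by exists m.-1 => k lt_k; rewrite big_nat_recl // big_nat1 /=; lia.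
Qed.

(* [k'] is [(k + h) %% h.*2.+1], written out without [modn]. *)
Definition triple_rows h r k :=
  let k' := if k <= h then k + h else k - h.+1 in
  match r with 0 => k | 1 => k' | _ => 3 * h - k - k' end.

Lemma kotzig_triple h : kotzig_array 3 h.*2.+1 (triple_rows h).
Proof.
rewrite /triple_rows; split.
- by case=> [|[|r]] k _ lt_k /=; try case: ifP; lia.
- by case=> [|[|r]] k k' _ lt_k lt_k' /=; do 2 try case: ifP; lia.
- exists (3 * h) => k lt_k.
  by rewrite !big_nat_recl // big_geq //=; case: ifP; lia.
Qed.

Lemma kotzig_even s m : exists w, kotzig_array s.*2 m w.
Proof.
elim: s => [|s [w kw]].
  by exists (fun _ _ => 0); split=> //; exists 0 => k _; rewrite big_geq.
exists (stack_rows 2 (pair_rows m) w); rewrite doubleS -addn2 addnC.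
exact: kotzig_stack (kotzig_pair m) kw.
Qed.

Lemma kotzig_odd s m : odd m -> exists w, kotzig_array (s.*2 + 3) m w.
Proof.
move=> odd_m; have [w kw] := kotzig_even s m.
have m_eq : m = (m./2).*2.+1 by rewrite -[LHS]odd_double_half odd_m.
exists (stack_rows s.*2 w (triple_rows m./2)); apply: kotzig_stack kw _.
by rewrite [in X in kotzig_array _ X]m_eq; apply: kotzig_triple.
Qed.

Section MCRFromKotzig.
Variables (n p q : nat) (w : nat -> nat -> nat).
Hypotheses (n_gt0 : 0 < n) (kw : kotzig_array n (p * q) w).

Let div_lt (i : 'I_(n * p)) : i %/ n < p.
Proof. by rewrite ltn_divLR // (mulnC p). Qed.

Let seg (i : 'I_(n * p)) (j : 'I_q) := i %/ n + p * j.

Let seg_lt i j : seg i j < p * q.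
Proof. by have := div_lt i; have := ltn_ord j; rewrite /seg; nia. Qed.

Let entry (x : 'I_(n * p) * 'I_q) :=
  x.1 %% n * (p * q) + w (x.1 %% n) (seg x.1 x.2).

Let entry_lt x : entry x < #|{: 'I_(n * p) * 'I_q}|.
Proof.
case: kw => w_lt _ _; rewrite card_prod !card_ord /entry.
have lt_r : x.1 %% n < n by rewrite ltn_mod.
have := w_lt _ _ lt_r (seg_lt x.1 x.2); nia.
Qed.

Let entry_inj : injective entry.
Proof.
case: kw => w_lt w_inj _ [i j] [i' j'] /=.
have lt_r : i %% n < n by rewrite ltn_mod.
have lt_r' : i' %% n < n by rewrite ltn_mod.
move/(divmod_uniq (w_lt _ _ lt_r (seg_lt i j)) (w_lt _ _ lt_r' (seg_lt i' j'))).
move=> [eq_r]; rewrite -eq_r => /(w_inj _ _ _ lt_r (seg_lt i j) (seg_lt i' j')).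
rewrite /seg ![p * _]mulnC ![_ + _ * p]addnC.
move=> /(divmod_uniq (div_lt i) (div_lt i')) [eq_j eq_s].
have eq_i : i = i' :> nat by rewrite (divn_eq i n) (divn_eq i' n) eq_s eq_r.
by congr pair; apply: val_inj.
Qed.

Lemma MCR_of_kotzig : MCR_exists n p q.
Proof.
have card_npq : #|{: 'I_(n * p) * 'I_q}| = n * p * q by rewrite card_prod !card_ord.
exists (\matrix_(i, j) (entry (i, j)).+1)%R; split; [|split].
- move=> k /andP [k_gt0 le_k].
  have lt_k : k.-1 < #|{: 'I_(n * p) * 'I_q}| by rewrite card_npq; lia.
  have [x [ex ux]] := inj_ord_onto entry_lt entry_inj lt_k.
  exists x; split=> [|y]; rewrite mxE.
    by rewrite -surjective_pairing ex; lia.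
  by rewrite -surjective_pairing => ey; apply: ux; lia.
- by move=> i j; rewrite mxE; have := entry_lt (i, j); rewrite card_npq; lia.
case: kw => _ _ [c sum_w].
exists (\sum_(r < n) r * (p * q) + c + n) => s j.
have lt_sj : s + p * j < p * q by have := ltn_ord j; have := ltn_ord s; nia.
rewrite (eq_bigr (fun r : 'I_n => r * (p * q) + w r (s + p * j) + 1)) => [|r _].
  rewrite !big_split /= sum1_card card_ord.
  by rewrite -(big_mkord xpredT (fun r => w r (s + p * j))) sum_w.
rewrite mxE /entry /seg /= modnMDl modn_small // divnMDl // divn_small //.
by rewrite addn0 addn1.
Qed.

End MCRFromKotzig.

Theorem theorem9 (n p q : nat) (hn : 1 < n) (hp : 1 < p) (hq : 1 <= q) :
  MCR_exists n p q <-> (~~ odd n \/ (odd n /\ odd p /\ odd q)).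
Proof.
have n_gt0 : 0 < n by lia.
split.
  move=> /(MCR_magic_constant (ltnW hp) hq) [c /(congr1 odd)].
  rewrite odd_double oddM /= !oddM.
  by case: (odd n) (odd p) (odd q) => [] [] []; auto.
have half_n := odd_double_half n.
case=> [even_n | [odd_n [odd_p odd_q]]].
  have [w kw] := kotzig_even n./2 (p * q).
  have n_eq : n./2.*2 = n by rewrite -[RHS]half_n (negbTE even_n).
  by rewrite n_eq in kw; apply: MCR_of_kotzig n_gt0 kw.
have odd_pq : odd (p * q) by rewrite oddM odd_p odd_q.
have [w kw] := kotzig_odd (n./2 - 1) odd_pq.
have n_eq : (n./2 - 1).*2 + 3 = n by rewrite odd_n in half_n; rewrite -mul2n; lia.
by rewrite n_eq in kw; apply: MCR_of_kotzig n_gt0 kw.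
Qed.
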